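(* Let $\mathcal{H}$ be a complex Hilbert space, let $B,X\in\mathcal{B}(\mathcal{H})$, and let $A\in\mathcal{B}(\mathcal{H})$ be positive and invertible. Let $M=\begin{pmatrix} A & X\\ X^{*} & B\end{pmatrix}\in\mathcal{B}(\mathcal{H}\oplus\mathcal{H})$, and assume that $AB-X^{*}X=0$ and $AX=XA$. Then there exists $W\in\mathcal{B}(\mathcal{H})$ such that $X=AW$ and $B=W^{*}AW$, i.e. $$M=\begin{pmatrix} A & AW\\ W^{*}A & W^{*}AW\end{pmatrix}.$$
   Context: Here $\det M:=AB-X^{*}X$. A matrix of the displayed form is called a flat extension of $A$. *)

From HB Require Import structures.
From mathcomp Require Import all_boot all_order all_algebra.
From mathcomp Require Import reals complex.
Set Implicit Arguments. Unset Strict Implicit. Unset Printing Implicit Defensive.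
Import Order.TTheory GRing.Theory Num.Theory.
Local Open Scope ring_scope.

Section Hilbert.
Variables (R : realType) (V : lmodType R[i]) (inner : V -> V -> R[i]).

Definition is_inner_product : Prop :=
  [/\ (forall (a : R[i]) (x y z : V), inner (a *: x + y) z = a * inner x z + inner y z),
      (forall x y : V, inner y x = Num.conj (inner x y)),
      (forall x : V, 0 <= inner x x) &
      (forall x : V, inner x x = 0 -> x = 0)].

Definition hnorm (x : V) : R := Num.sqrt (complex.Re (inner x x)).

Definition hcauchy (u : nat -> V) : Prop :=
  forall e : R, 0 < e -> exists N : nat, forall m n : nat,
    (N <= m)%N -> (N <= n)%N -> hnorm (u m - u n) < e.

Definition hconverges (u : nat -> V) (l : V) : Prop :=
  forall e : R, 0 < e -> exists N : nat, forall n : nat,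
    (N <= n)%N -> hnorm (u n - l) < e.

Definition is_hilbert : Prop :=
  is_inner_product /\
  (forall u : nat -> V, hcauchy u -> exists l : V, hconverges u l).

Definition bounded_op (T : V -> V) : Prop :=
  (forall (a : R[i]) (x y : V), T (a *: x + y) = a *: T x + T y) /\
  (exists K : R, forall x : V, hnorm (T x) <= K * hnorm x).

Definition is_adjoint (T S : V -> V) : Prop :=
  forall x y : V, inner (T x) y = inner x (S y).

Definition positive_op (A : V -> V) : Prop :=
  forall x : V, 0 <= inner (A x) x.

Definition invertible_op (A : V -> V) : Prop :=
  exists Ai : V -> V, bounded_op Ai /\
    (forall x, A (Ai x) = x) /\ (forall x, Ai (A x) = x).

End Hilbert.

(* With W := A^-1 X one has X = A W at once; the content is B = W^* A W.
   Positivity makes A self-adjoint (polarization), so taking adjoints in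
   AX = XA shows that X^* commutes with A and hence with A^-1.  Then
   W^* A W = X^* A^-1 X = A^-1 X^* X = A^-1 A B = B. *)
From HB Require Import structures.
From mathcomp Require Import all_boot all_order all_algebra.
From mathcomp Require Import reals complex.
From mathcomp Require Import ring.
Import Order.TTheory GRing.Theory Num.Theory.
Local Open Scope ring_scope.

Section Polarization.
Set Implicit Arguments. Unset Strict Implicit.
Variables (C : numClosedFieldType) (V : lmodType C) (f : V -> V -> C).
Hypotheses (fDl : forall x y z, f (x + y) z = f x z + f y z)
           (fDr : forall x y z, f z (x + y) = f z x + f z y)
           (fZl : forall a x z, f (a *: x) z = a * f x z)
           (fZr : forall a x z, f z (a *: x) = a^* * f z x).

Lemma sesquilinear_diag0 : (forall x, f x x = 0) -> forall x y, f x y = 0.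
Proof.
move=> f0 x y.
have sum0 : f x y + f y x = 0.
  by have := f0 (x + y); rewrite fDl !fDr !f0 add0r addr0.
have diff0 : 'i * (f y x - f x y) = 0.
  have := f0 (x + 'i *: y); rewrite fDl !fDr !f0 fZl fZr add0r addr0 conjCi.
  by move=> <-; ring.
move/eqP: diff0; rewrite mulf_eq0 (negbTE (@neq0Ci _)) /= subr_eq0 => /eqP fyx.
by move/eqP: sum0; rewrite -fyx -mulr2n mulrn_eq0 /= => /eqP.
Qed.

End Polarization.

Section InnerProduct.
Set Implicit Arguments. Unset Strict Implicit.
Variables (R : realType) (V : lmodType R[i]) (inner : V -> V -> R[i]).
Hypothesis Hi : is_inner_product inner.

Definition linear_op (T : V -> V) : Prop :=
  forall (a : R[i]) (x y : V), T (a *: x + y) = a *: T x + T y.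

Section LinearOp.
Variables (T : V -> V) (linT : linear_op T).

Lemma linear_op0 : T 0 = 0.
Proof.
have h := linT 1 0 0; rewrite scaler0 addr0 scale1r in h.
by apply: (@addrI _ (T 0)); rewrite addr0 -h.
Qed.

Lemma linear_opD x y : T (x + y) = T x + T y.
Proof. by rewrite -[x]scale1r linT !scale1r. Qed.

Lemma linear_opZ a x : T (a *: x) = a *: T x.
Proof. by rewrite -[a *: x]addr0 linT linear_op0 addr0. Qed.

End LinearOp.

Lemma linear_op_comp (T U : V -> V) :
  linear_op T -> linear_op U -> linear_op (T \o U).
Proof. by move=> linT linU a x y /=; rewrite linU linT. Qed.

Lemma bounded_op_comp (T U : V -> V) :
  bounded_op inner T -> bounded_op inner U -> bounded_op inner (T \o U).
Proof.
move=> [linT [KT normT]] [linU [KU normU]].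
split; first exact: linear_op_comp.
have hnorm_ge0 z : 0 <= hnorm inner z by exact: sqrtr_ge0.
exists (`|KT| * `|KU|) => x /=.
apply: (le_trans (normT _)).
apply: (le_trans (ler_wpM2r (hnorm_ge0 (U x)) (ler_norm KT))); rewrite -mulrA.
apply: ler_wpM2l; first exact: normr_ge0.
by apply: (le_trans (normU x)); apply: ler_wpM2r; [exact: hnorm_ge0 | exact: ler_norm].
Qed.

Lemma is_adjoint_comp (T Ts U Us : V -> V) :
  is_adjoint inner T Ts -> is_adjoint inner U Us ->
  is_adjoint inner (T \o U) (Us \o Ts).
Proof. by move=> adjT adjU x y /=; rewrite adjT adjU. Qed.

Lemma is_adjoint_inv (T Ts Ti Tsi : V -> V) :
  is_adjoint inner T Ts -> (forall x, T (Ti x) = x) -> (forall y, Ts (Tsi y) = y) ->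
  is_adjoint inner Ti Tsi.
Proof. by move=> adjT TK TsK x y; rewrite -{1}(TsK y) -adjT TK. Qed.

Lemma inner_lin a x y z : inner (a *: x + y) z = a * inner x z + inner y z.
Proof. by case: Hi. Qed.

Lemma inner_conj x y : inner y x = (inner x y)^*.
Proof. by case: Hi => _ conj_inner _ _; apply: conj_inner. Qed.

Lemma inner_eq0 x : inner x x = 0 -> x = 0.
Proof. by case: Hi => _ _ _ definite; apply: definite. Qed.

Lemma innerDl x y z : inner (x + y) z = inner x z + inner y z.
Proof. by rewrite -[x]scale1r inner_lin mul1r scale1r. Qed.

Lemma inner0l z : inner 0 z = 0.
Proof. by apply: (@addrI _ (inner 0 z)); rewrite -innerDl !addr0. Qed.

Lemma innerZl a x z : inner (a *: x) z = a * inner x z.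
Proof. by rewrite -[a *: x]addr0 inner_lin inner0l addr0. Qed.

Lemma innerNl x z : inner (- x) z = - inner x z.
Proof. by rewrite -scaleN1r innerZl mulN1r. Qed.

Lemma innerDr x y z : inner z (x + y) = inner z x + inner z y.
Proof. by rewrite inner_conj innerDl rmorphD /= -!inner_conj. Qed.

Lemma innerZr a x z : inner z (a *: x) = a^* * inner z x.
Proof. by rewrite inner_conj innerZl rmorphM /= -!inner_conj. Qed.

Lemma inner_rinj u v : (forall x, inner x u = inner x v) -> u = v.
Proof.
move=> eq_uv; apply/eqP; rewrite -subr_eq0; apply/eqP/inner_eq0.
by rewrite innerDl innerNl [inner u _]inner_conj eq_uv -inner_conj subrr.
Qed.

Lemma selfadjoint_of_real_form (A : V -> V) :
  linear_op A -> (forall x, inner (A x) x \is Num.real) -> is_adjoint inner A A.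
Proof.
move=> linA realA x y; apply/eqP; rewrite -subr_eq0; apply/eqP.
apply: (@sesquilinear_diag0 _ _ (fun x y => inner (A x) y - inner x (A y))) => {x y}.
- by move=> x y z; rewrite linear_opD // !innerDl; ring.
- by move=> x y z; rewrite linear_opD // !innerDr; ring.
- by move=> a x z; rewrite linear_opZ // !innerZl; ring.
- by move=> a x z; rewrite linear_opZ // !innerZr; ring.
- by move=> x; rewrite [inner x _]inner_conj conj_Creal // subrr.
Qed.

Lemma positive_op_selfadjoint (A : V -> V) :
  linear_op A -> positive_op inner A -> is_adjoint inner A A.
Proof.
by move=> linA posA; apply: selfadjoint_of_real_form => // x; apply: ger0_real.
Qed.

Lemma adjoint_commute (A As X Xs : V -> V) :
  is_adjoint inner A As -> is_adjoint inner X Xs ->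
  (forall x, A (X x) = X (A x)) -> forall y, Xs (As y) = As (Xs y).
Proof.
move=> adjA adjX AX y; apply: inner_rinj => x.
by rewrite -adjX -adjA AX adjX adjA.
Qed.

End InnerProduct.

Lemma commute_inverse {T : Type} (f g gi : T -> T) :
  cancel g gi -> (forall y, g (gi y) = y) ->
  (forall x, f (g x) = g (f x)) -> forall y, f (gi y) = gi (f y).
Proof. by move=> gK giK fg y; rewrite -[LHS]gK -fg giK. Qed.

Theorem proposition2p12 (R : realType) (V : lmodType R[i])
  (inner : V -> V -> R[i]) (Hh : is_hilbert inner)
  (A B X Xs : V -> V)
  (hA : bounded_op inner A) (hB : bounded_op inner B)
  (hX : bounded_op inner X) (hXs : bounded_op inner Xs)
  (hXadj : is_adjoint inner X Xs)
  (hApos : positive_op inner A) (hAinv : invertible_op inner A)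
  (hdet : forall x : V, A (B x) - Xs (X x) = 0)
  (hcomm : forall x : V, A (X x) = X (A x)) :
  exists W Ws : V -> V,
    [/\ bounded_op inner W, bounded_op inner Ws, is_adjoint inner W Ws,
        (forall x : V, X x = A (W x)) &
        (forall x : V, B x = Ws (A (W x)))].
Proof.
case: Hh => Hi _; case: hAinv => Ai [hAi [AAi AiA]].
have adjA : is_adjoint inner A A := positive_op_selfadjoint Hi hA.1 hApos.
have adjAi : is_adjoint inner Ai Ai := is_adjoint_inv adjA AAi AAi.
have XsA : forall y, Xs (A y) = A (Xs y) := adjoint_commute Hi adjA hXadj hcomm.
have XsAi : forall y, Xs (Ai y) = Ai (Xs y) := commute_inverse AiA AAi XsA.
exists (Ai \o X), (Xs \o Ai); split.
- exact: bounded_op_comp hAi hX.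
- exact: bounded_op_comp hXs hAi.
- exact: is_adjoint_comp adjAi hXadj.
- by move=> x /=; rewrite AAi.
- move=> x /=; rewrite AiA XsAi.
  by move/eqP: (hdet x); rewrite subr_eq0 => /eqP <-; rewrite AiA.
Qed.
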